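(* Let $n,m\in\mathbb N$, $d:=\min\{n,m\}$, fix an integer $k\in\{1,\dots,d-1\}$ and $\theta\in(0,1)$, and set $\alpha:=k+\theta$. Then (a) $\mathcal V_k\subsetneq\mathcal V_\alpha\subsetneq\mathcal V_{k+1}$; (b) $\mathsf K_k\subsetneq\mathsf K_\alpha\subsetneq\mathsf K_{k+1}$; (c) $\mathsf{BP}_k\supsetneq\mathsf{BP}_\alpha\supsetneq\mathsf{BP}_{k+1}$.
   Context: For $\psi=\sum_{i,j}a_{ij}e_i\otimes f_j\in\mathbb C^n\otimes\mathbb C^m$, its Schmidt coefficients $s_1(\psi)\ge\dots\ge s_d(\psi)\ge0$ are the singular values of $[a_{ij}]$. For $\beta\in[1,d]$ with $k'=\lfloor\beta\rfloor$, $\theta'=\beta-k'$, $r'=\lceil\beta\rceil$, a unit vector $\psi$ is $\beta$-admissible if $s_j(\psi)=0$ for $j\ge r'+1$ and, when $\theta'>0$, $s_{k'+1}(\psi)\le\frac{\theta'}{k'}\sum_{j=1}^{k'}s_j(\psi)$; $\mathcal V_\beta$ is the set of these (for integer $\beta$ it is the set of unit vectors of Schmidt rank $\le\beta$). $\mathsf K_\beta$ is the closure of the convex cone generated by $\{\psi\psi^\ast:\psi\in\mathcal V_\beta\}$, and $\mathsf{BP}_\beta:=\{W \text{ Hermitian in } \mathbb M_n\otimes\mathbb M_m:\langle\psi,W\psi\rangle\ge0\ \forall\psi\in\mathcal V_\beta\}$. *)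

From HB Require Import structures.
From mathcomp Require Import all_boot all_order all_algebra.
From mathcomp Require Import classical_sets reals.
From mathcomp Require Import complex.
Set Implicit Arguments. Unset Strict Implicit. Unset Printing Implicit Defensive.
Import Order.TTheory GRing.Theory Num.Theory.
Local Open Scope ring_scope.
Local Open Scope complex_scope.

Section Defs.
Variables (R : realType) (n m : nat).
Local Notation C := (R[i]).

(* A vector psi = sum_{i,j} a_ij e_i (x) f_j of C^n (x) C^m is represented by its
   coefficient matrix a : 'M[C]_(n,m).  Operators on C^n (x) C^m (elements of
   M_n (x) M_m) are represented by their entries indexed by pairs of basis
   indices:  W (i,j) (k,l) = < e_i (x) f_j , W (e_k (x) f_l) >. *)
Definition op := 'I_n * 'I_m -> 'I_n * 'I_m -> C.

(* s : nat -> R is the (0-indexed) sequence of Schmidt coefficients of a: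
   s 0 >= s 1 >= ... >= s (d-1) >= 0 are the singular values of a, i.e. the
   square roots of the eigenvalues (with multiplicity) of a a^*, whose remaining
   n - d eigenvalues are 0; s j = 0 for j >= d. *)
Definition schmidt_coeffs (a : 'M[C]_(n, m)) (s : nat -> R) : Prop :=
  let d := minn n m in
  [/\ forall j, (j < d)%N -> 0 <= s j,
      forall i j, (i <= j)%N -> (j < d)%N -> s j <= s i,
      forall j, (d <= j)%N -> s j = 0
    & char_poly (a *m (map_mx conjc a)^T)
        = \prod_(j < d) ('X - ((s j) ^+ 2)%:C%:P) * 'X^(n - d)].

Definition unit_vec (a : 'M[C]_(n, m)) : Prop :=
  \sum_(i < n) \sum_(j < m) a i j * (a i j)^* = 1.

Definition kfl (beta : R) : nat := Num.truncn beta.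
Definition thfr (beta : R) : R := beta - (kfl beta)%:R.
Definition rcl (beta : R) : nat := if 0 < thfr beta then (kfl beta).+1 else kfl beta.

(* beta-admissibility (s_j is 0-indexed here: paper's s_{j+1} is s j) *)
Definition admissible (beta : R) (a : 'M[C]_(n, m)) : Prop :=
  unit_vec a /\
  exists s, schmidt_coeffs a s /\
    (forall j, (rcl beta <= j)%N -> s j = 0) /\
    (0 < thfr beta ->
       s (kfl beta) <= thfr beta / (kfl beta)%:R * \sum_(j < kfl beta) s j).

Definition V (beta : R) : set 'M[C]_(n, m) := [set a | admissible beta a].

Definition proj (a : 'M[C]_(n, m)) : op :=
  fun p q => a p.1 p.2 * (a q.1 q.2)^*.

Definition cone (beta : R) : set op :=
  [set X | exists s : seq (R * 'M[C]_(n, m)),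
     (forall c, c \in s -> 0 <= c.1 /\ V beta c.2) /\
     forall p q, X p q = \sum_(c <- s) (c.1)%:C * proj c.2 p q].

Definition K (beta : R) : set op :=
  [set X | forall eps : R, 0 < eps ->
     exists Y, cone beta Y /\ forall p q, `|X p q - Y p q| < eps%:C].

Definition hermitian (W : op) : Prop := forall p q, W p q = (W q p)^*.

Definition qform (W : op) (a : 'M[C]_(n, m)) : C :=
  \sum_(p : 'I_n * 'I_m) \sum_(q : 'I_n * 'I_m) (a p.1 p.2)^* * W p q * a q.1 q.2.

Definition BP (beta : R) : set op :=
  [set W | hermitian W /\ forall a, V beta a -> 0 <= qform W a].

End Defs.

(* If a has Schmidt coefficients s, then |sum_(l < r) a_ll| <= sum_j s_j: writing
   a = P^* b with P unitary diagonalising a a^*, the squared row norms of b are the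
   eigenvalues of a a^* (the s_j^2, padded with zeros), and Cauchy-Schwarz applies row
   by row.  For (k + th)-admissible unit vectors an elementary estimate gives
   (sum_j s_j)^2 <= g(th) := (k + th)^2 / (k + th^2), with equality for coefficients
   proportional to (1, ..., 1, th), and g increases strictly on [0, 1] from k to k + 1.
   Hence W_th := g(th) Id - omega omega^*, with omega = sum_(l <= k) e_l (x) f_l, is
   block positive on V_(k + th), whereas the vector with coefficients proportional to
   (1, ..., 1, tau) lies in V_(k + tau) and has <psi, W_th psi> = g(th) - g(tau) < 0 for
   th < tau.  The pairs (th, tau) = (0, theta) and (theta, 1) separate both steps of the
   chains of V's and of BP's and, as X |-> tr (W X) is continuous and nonnegative on the
   cone, of the K's too. *)
From Pilot Require Import Defs.
From mathcomp Require Import all_boot all_order all_algebra.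
From mathcomp Require Import classical_sets reals complex.
From mathcomp Require Import ring lra.

Set Implicit Arguments.
Unset Strict Implicit.
Unset Printing Implicit Defensive.

Import Order.TTheory GRing.Theory Num.Theory.
Local Open Scope ring_scope.
Local Open Scope sesquilinear_scope.
Local Open Scope complex_scope.

Lemma sqr_sum_mul_le (F : numDomainType) (I : finType) (x y : I -> F) :
  (forall i, x i \is Num.real) -> (forall i, y i \is Num.real) ->
  (\sum_i x i * y i) ^+ 2 <= (\sum_i x i ^+ 2) * (\sum_i y i ^+ 2).
Proof.
move=> xR yR; rewrite -subr_ge0 -(pmulr_rge0 _ (ltr0n F 2)).
have -> : 2%:R * ((\sum_i x i ^+ 2) * (\sum_i y i ^+ 2) - (\sum_i x i * y i) ^+ 2) =
    \sum_i \sum_j (x i * y j - x j * y i) ^+ 2.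
  transitivity ((\sum_i x i ^+ 2) * (\sum_j y j ^+ 2) + (\sum_i y i ^+ 2) * (\sum_j x j ^+ 2)
      - 2%:R * ((\sum_i x i * y i) * (\sum_j x j * y j))); first ring.
  rewrite !big_distrlr /= -big_split mulr_sumr -sumrB; apply: eq_bigr => i _.
  by rewrite -big_split mulr_sumr -sumrB; apply: eq_bigr => j _ /=; ring.
apply: sumr_ge0 => i _; apply: sumr_ge0 => j _.
by rewrite real_exprn_even_ge0 // realB // realM.
Qed.

Lemma ler_sum_widen (F : numDomainType) p q (lepq : (p <= q)%N) (f : 'I_q -> F) :
  (forall i, 0 <= f i) -> \sum_(i < p) f (widen_ord lepq i) <= \sum_(i < q) f i.
Proof.
move=> f0; rewrite -(big_ord_narrow lepq) [leRHS](bigID (fun i : 'I_q => (i < p)%N)) /=.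
by rewrite lerDl sumr_ge0.
Qed.

Lemma sumr_ord_trunc (V : nmodType) (F : nat -> V) p q : (p <= q)%N ->
  (forall j, (p <= j)%N -> F j = 0) -> \sum_(j < q) F j = \sum_(j < p) F j.
Proof.
move=> lepq F0; rewrite -!(big_mkord xpredT) (big_cat_nat (leq0n p) lepq) /=.
by rewrite [X in _ + X]big_nat_cond [X in _ + X]big1 ?addr0 // => j /andP[/andP[/F0 ->]].
Qed.

Lemma char_poly_similar (F : fieldType) p (P A : 'M[F]_p) : P \in unitmx ->
  char_poly (invmx P *m A *m P) = char_poly A.
Proof.
move=> Pu; rewrite /char_poly /char_poly_mx !map_mxM map_invmx.
set P' := map_mx polyC P; have P'u : P' \in unitmx by rewrite map_unitmx.
have -> : 'X%:M - invmx P' *m map_mx polyC A *m P' =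
    invmx P' *m ('X%:M - map_mx polyC A) *m P'.
  by rewrite mulmxBr mulmxBl mul_mx_scalar -scalemxAl mulVmx // scalemx1.
by rewrite !det_mulmx mulrAC -det_mulmx mulVmx // det1 mul1r.
Qed.

Lemma unitarymx_row_norm (C : numClosedFieldType) p q (P : 'M[C]_(p, q)) i :
  P \is unitarymx -> \sum_j `|P i j| ^+ 2 = 1.
Proof.
move=> /unitarymxP /matrixP /(_ i i); rewrite !mxE eqxx mulr1n => <-.
by apply: eq_bigr => j _; rewrite !mxE normCK.
Qed.

Section SchmidtCoefficients.
Variables (R : realType) (n m : nat).
Local Notation C := R[i].
Implicit Types a : 'M[C]_(n, m).

Definition gram a : 'M[C]_n := a *m a^t*.

Lemma gramE a : a *m (map_mx conjc a)^T = gram a.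
Proof. by congr (_ *m _); apply/matrixP => i j; rewrite !mxE; case: (a j i). Qed.

Lemma gram_normal a : gram a \is normalmx.
Proof. by rewrite qualifE /gram trmx_mul map_mxM trmxCK. Qed.

Lemma gram_spectral a : gram a =
  invmx (spectralmx (gram a)) *m diag_mx (spectral_diag (gram a)) *m spectralmx (gram a).
Proof. exact/orthomx_spectralP/gram_normal. Qed.

Lemma sum_gram_eigenvalues a (s : nat -> R) (F : C -> C) : schmidt_coeffs a s -> F 0 = 0 ->
  \sum_i F (spectral_diag (gram a) 0 i) = \sum_(j < minn n m) F (s j ^+ 2)%:C.
Proof.
move=> [_ _ _ chi] F0; set lam := spectral_diag (gram a).
have : perm_eq [seq lam 0 i | i <- index_enum 'I_n]
    ([seq (s j ^+ 2)%:C | j <- index_iota 0 (minn n m)] ++ nseq (n - minn n m) 0).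
  apply: prod_XsubC_eq; rewrite big_cat !big_map big_nseq subr0 iter_mulr_1 /= big_mkord.
  rewrite -chi gramE gram_spectral char_poly_similar ?spectral_unit //.
  by rewrite char_poly_trig ?diag_mx_is_trig //; apply: eq_bigr => i _; rewrite mxE eqxx.
move=> lamE; rewrite -(big_map (fun i => lam 0 i) xpredT F) (perm_big _ lamE).
rewrite big_cat /= [X in _ + X]big1_seq ?addr0 ?big_map ?big_mkord //.
by move=> x /andP[_ /nseqP[-> _]].
Qed.

Lemma sum_sqr_norm_schmidt a (s : nat -> R) : schmidt_coeffs a s ->
  \sum_(i < n) \sum_(j < m) a i j * (a i j)^* = (\sum_(j < minn n m) s j ^+ 2)%:C.
Proof.
move=> sa; rewrite rmorph_sum -(sum_gram_eigenvalues (F := id) sa) //.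
transitivity (\tr (gram a)).
  by apply: eq_bigr => i _; rewrite mxE; apply: eq_bigr => j _; rewrite !mxE.
by rewrite {1}gram_spectral -mulmxA mxtrace_mulC mulmxK ?spectral_unit // mxtrace_diag.
Qed.

Lemma unit_vec_schmidt a (s : nat -> R) : schmidt_coeffs a s ->
  unit_vec a <-> \sum_(j < minn n m) s j ^+ 2 = 1.
Proof.
move=> sa; rewrite /unit_vec (sum_sqr_norm_schmidt sa) -(rmorph1 (real_complex R)).
by split=> [/fmorph_inj|->].
Qed.

Lemma schmidt_coeffs_ge0 a (s : nat -> R) : schmidt_coeffs a s -> forall j, 0 <= s j.
Proof. by case=> s_ge0 _ s0 _ j; have [/s_ge0 //|/s0 ->] := ltnP j (minn n m). Qed.

Lemma spectral_diag_gram a i : spectral_diag (gram a) 0 i =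
  \sum_j `|(spectralmx (gram a) *m a) i j| ^+ 2.
Proof.
set P := spectralmx (gram a); have Pu : P \is unitarymx := spectral_unitarymx _.
have : (P *m a) *m (P *m a)^t* = diag_mx (spectral_diag (gram a)).
  rewrite trmx_mul map_mxM mulmxA -(mulmxA P) -/(gram a) {1}gram_spectral -/P.
  by rewrite invmx_unitary // !mulmxA (unitarymxP Pu) mul1mx mulmxtVK.
move=> /matrixP /(_ i i); rewrite !mxE eqxx mulr1n => <-.
by apply: eq_bigr => j _; rewrite !mxE normCK.
Qed.

Lemma norm_diag_sum_le a (s : nat -> R) r (le_rn : (r <= n)%N) (le_rm : (r <= m)%N) :
  schmidt_coeffs a s ->
  `|\sum_(l < r) a (widen_ord le_rn l) (widen_ord le_rm l)| <= (\sum_(j < minn n m) s j)%:C.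
Proof.
move=> sa; set P := spectralmx (gram a); set b := P *m a.
have Pu : P \is unitarymx := spectral_unitarymx _.
have aE x y : a x y = \sum_i (P i x)^* * b i y.
  rewrite -[a](mulKmx (spectral_unit (gram a))) invmx_unitary // -/P -/b mxE.
  by apply: eq_bigr => i _; rewrite !mxE.
have row_bound i : \sum_(l < r) `|(P i (widen_ord le_rn l))^* * b i (widen_ord le_rm l)|
    <= sqrtC (spectral_diag (gram a) 0 i).
  under eq_bigr do rewrite normrM norm_conjC.
  rewrite spectral_diag_gram -/b -[leLHS]sqrCK ?sumr_ge0 // => [|l _]; last first.
    by rewrite mulr_ge0.
  rewrite ler_sqrtC ?nnegrE ?exprn_ge0 ?sumr_ge0 // => [|l _|l _].
  - apply: le_trans (sqr_sum_mul_le _ _) _ => [l|l|]; rewrite ?normr_real //.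
    rewrite -[leRHS]mul1r -(unitarymx_row_norm i Pu).
    by apply: ler_pM; try apply: ler_sum_widen; try apply: sumr_ge0; move=> *; rewrite exprn_ge0.
  - by rewrite mulr_ge0.
  - by rewrite exprn_ge0.
have sqrt_sqr j : sqrtC (s j ^+ 2)%:C = (s j)%:C.
  by rewrite rmorphXn sqrCK // lecR (schmidt_coeffs_ge0 sa).
under eq_bigr do rewrite aE; rewrite exchange_big /=.
apply: le_trans (ler_norm_sum _ _ _) _.
apply: le_trans (ler_sum _ (fun i _ => le_trans (ler_norm_sum _ _ _) (row_bound i))) _.
rewrite (sum_gram_eigenvalues (F := sqrtC) sa) ?sqrtC0 // rmorph_sum.
by under eq_bigr do rewrite sqrt_sqr.
Qed.

End SchmidtCoefficients.

Section DiagonalStates.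
Variables (R : realType) (n m : nat).
Local Notation C := R[i].

Definition diag_state (f : nat -> R) : 'M[C]_(n, m) :=
  \matrix_(i, j) if i == j :> nat then (f i)%:C else 0.

Lemma gram_diag_state f : (forall j, (minn n m <= j)%N -> f j = 0) ->
  gram (diag_state f) = diag_mx (\row_i (f i ^+ 2)%:C).
Proof.
move=> f0; have conjC_real (x : R) : Num.conj x%:C = x%:C := conjc_real x.
apply/matrixP => i i'; rewrite !mxE; under eq_bigr do rewrite !mxE.
have [ltim|leim] := ltnP i m; last first.
  rewrite f0 ?expr0n ?rmorph0 ?mul0rn; last by rewrite geq_min leim orbT.
  rewrite big1 // => j _; case: eqP => [eq_ij|_]; last by rewrite mul0r.
  by move: leim; rewrite eq_ij leqNgt ltn_ord.
rewrite (bigD1 (Ordinal ltim)) //= big1 ?addr0 => [|j]; last first.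
  by rewrite -val_eqE /= eq_sym => /negbTE ->; rewrite mul0r.
rewrite eqxx; case: (eqVneq i i') => [<-|neq_ii'].
  by rewrite eqxx mulr1n conjC_real -rmorphM.
by rewrite mulr0n eq_sym val_eqE (negbTE neq_ii') rmorph0 mulr0.
Qed.

Lemma diag_state_schmidt f :
  (forall j, 0 <= f j) -> (forall i j, (i <= j)%N -> f j <= f i) ->
  (forall j, (minn n m <= j)%N -> f j = 0) -> schmidt_coeffs (diag_state f) f.
Proof.
move=> f_ge0 f_noninc f0; split=> [j _|i j le_ij _||] //; first exact: f_noninc.
rewrite gramE gram_diag_state // char_poly_trig ?diag_mx_is_trig //.
under eq_bigr do rewrite !mxE eqxx mulr1n.
rewrite -(big_mkord xpredT (fun i => 'X - ((f i ^+ 2)%:C)%:P)).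
rewrite (big_cat_nat (leq0n _) (geq_minl n m)) /= big_mkord; congr (_ * _).
rewrite big_nat_cond (eq_bigr (fun _ => 'X)) -?big_nat_cond ?prodr_const_nat // => i.
by case/andP=> /andP[le_i _] _; rewrite f0 // expr0n rmorph0 subr0.
Qed.

End DiagonalStates.

Section Witness.
Variables (R : realType) (n m r : nat).
Hypotheses (le_rn : (r <= n)%N) (le_rm : (r <= m)%N).
Local Notation C := R[i].

Definition diag_pair (l : 'I_r) : 'I_n * 'I_m := (widen_ord le_rn l, widen_ord le_rm l).

Definition diag_pairs : {set 'I_n * 'I_m} := diag_pair @: setT.

Definition diag_sum (a : 'M[C]_(n, m)) : C := \sum_l a (diag_pair l).1 (diag_pair l).2.

Definition witness (c : R) : op R n m := fun p q =>
  c%:C * (p == q)%:R - (p \in diag_pairs)%:R * (q \in diag_pairs)%:R.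

Lemma sum_diag_pairs (f : 'I_n * 'I_m -> C) :
  \sum_p (p \in diag_pairs)%:R * f p = \sum_l f (diag_pair l).
Proof.
rewrite (bigID (mem diag_pairs)) /= [X in _ + X]big1 ?addr0 => [|p /negbTE ->]; last first.
  by rewrite mul0r.
rewrite big_imset /= => [|l l' _ _ [] /val_inj //].
by apply: eq_big => l; rewrite ?in_setT // imset_f ?in_setT ?mul1r.
Qed.

Lemma witness_hermitian c : Defs.hermitian (witness c).
Proof.
move=> p q; rewrite /witness rmorphB !rmorphM !rmorph_nat eq_sym [X in _ = _ - X]mulrC.
by congr (_ * _ - _); exact/esym/conjc_real.
Qed.

Lemma qform_witness c a : qform (witness c) a =
  c%:C * (\sum_i \sum_j a i j * (a i j)^*) - `|diag_sum a| ^+ 2.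
Proof.
pose chi p : C := (p \in diag_pairs)%:R.
transitivity (\sum_p \sum_q (a p.1 p.2)^* * (c%:C * (p == q)%:R) * a q.1 q.2
    - \sum_p \sum_q (chi p * a p.1 p.2)^* * (chi q * a q.1 q.2)).
  rewrite /qform -sumrB; apply/eq_bigr => p _; rewrite -sumrB; apply/eq_bigr => q _.
  by rewrite /witness /chi rmorphM rmorph_nat; ring.
congr (_ - _).
  rewrite [in RHS]pair_bigA /= mulr_sumr; apply: eq_bigr => p _.
  rewrite (bigD1 p) //= eqxx big1 ?addr0 => [|q]; first by rewrite /= mulr1n mulr1; ring.
  by rewrite eq_sym => /negbTE ->; rewrite mulr0 mulr0 mul0r.
rewrite normCKC /diag_sum -!(sum_diag_pairs (fun p => a p.1 p.2)) rmorph_sum mulr_suml.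
by apply/eq_bigr => p _; rewrite mulr_sumr.
Qed.

Lemma diag_sum_diag_state f : diag_sum (diag_state n m f) = (\sum_(l < r) f l)%:C.
Proof. by rewrite /diag_sum rmorph_sum; apply: eq_bigr => l _; rewrite mxE eqxx. Qed.

End Witness.

Section Cones.
Variables (R : realType) (n m : nat).
Local Notation C := R[i].
Local Notation V := (@V R n m).
Local Notation cone := (@cone R n m).
Local Notation K := (@K R n m).
Local Notation BP := (@BP R n m).
Implicit Types (b : R) (W X Y : op R n m) (a : 'M[C]_(n, m)).

Definition pairing W X : C := \sum_p \sum_q W p q * X q p.

Lemma pairing_proj W a : pairing W (proj a) = qform W a.
Proof. by apply/eq_bigr => p _; apply/eq_bigr => q _; rewrite /proj; ring. Qed.

Lemma cone_sub b b' : (V b `<=` V b')%classic -> (cone b `<=` cone b')%classic.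
Proof.
by move=> sVV' X [s [s_cone sE]]; exists s; split=> // c /s_cone[c_ge0 /sVV'].
Qed.

Lemma K_sub b b' : (V b `<=` V b')%classic -> (K b `<=` K b')%classic.
Proof.
move=> /cone_sub sCC' X KX e e_gt0; have [Y [/sCC' CY XY]] := KX e e_gt0.
by exists Y.
Qed.

Lemma BP_sub b b' : (V b `<=` V b')%classic -> (BP b' `<=` BP b)%classic.
Proof. by move=> sVV' W [hW W_ge0]; split=> // a /sVV' /W_ge0. Qed.

Lemma K_proj b a : V b a -> K b (proj a).
Proof.
move=> Va e e_gt0; exists (proj a); split; last first.
  by move=> p q; rewrite subrr normr0 ltcR.
exists [:: (1, a)]; split=> [c|p q]; first by rewrite inE => /eqP ->.
by rewrite big_seq1 /= rmorph1 mul1r.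
Qed.

Lemma pairing_cone_ge0 b W Y : BP b W -> cone b Y -> 0 <= pairing W Y.
Proof.
move=> [_ W_ge0] [s [s_cone YE]].
have -> : pairing W Y = \sum_(c <- s) c.1%:C * qform W c.2.
  rewrite /pairing; under eq_bigr do under eq_bigr do rewrite YE mulr_sumr.
  under eq_bigr do rewrite exchange_big /=; rewrite exchange_big /=.
  apply: eq_bigr => c _; rewrite -pairing_proj /pairing mulr_sumr; apply: eq_bigr => p _.
  by rewrite mulr_sumr; apply: eq_bigr => q _; ring.
rewrite big_seq sumr_ge0 // => c /s_cone[c_ge0 Vc].
by rewrite mulr_ge0 ?lecR ?W_ge0.
Qed.

Lemma norm_pairingB_le W X Y (e : C) : (forall p q, `|X p q - Y p q| <= e) ->
  `|pairing W X - pairing W Y| <= e * \sum_p \sum_q `|W p q|.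
Proof.
move=> XY; rewrite /pairing -sumrB mulr_sumr; apply: le_trans (ler_norm_sum _ _ _) _.
apply: ler_sum => p _; rewrite -sumrB mulr_sumr; apply: le_trans (ler_norm_sum _ _ _) _.
by apply: ler_sum => q _; rewrite -mulrBr normrM mulrC ler_wpM2r.
Qed.

Lemma pairing_K_nlt0 b W X : BP b W -> K b X -> ~ pairing W X < 0.
Proof.
move=> BPW KX pWX_lt0; set B := \sum_p \sum_q `|W p q|.
have B1_gt0 : 0 < B + 1 by rewrite ltr_wpDl ?ltr01 ?sumr_ge0 // => p _; rewrite sumr_ge0.
set e := - pairing W X / (B + 1).
have e_gt0 : 0 < e by rewrite divr_gt0 ?oppr_gt0.
have eE : (complex.Re e)%:C = e by rewrite RRe_real ?gtr0_real.
have Re_e_gt0 : 0 < complex.Re e by rewrite -ltcR eE.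
have [Y [CY XY]] := KX _ Re_e_gt0.
have pWY_ge0 := pairing_cone_ge0 BPW CY.
have dist_le : `|pairing W Y - pairing W X| <= e * B.
  by apply: norm_pairingB_le => p q; rewrite distrC -eE ltW.
have dist_ge : - pairing W X <= `|pairing W Y - pairing W X|.
  have d_real : pairing W Y - pairing W X \is Num.real.
    by apply: realB; [exact: ger0_real | exact: ltr0_real].
  by apply: le_trans _ (real_ler_norm d_real); rewrite lerDr.
have eB_lt : e * B < - pairing W X.
  by rewrite /e mulrAC ltr_pdivrMr // ltr_pM2l ?oppr_gt0 // ltrDl ltr01.
by have := le_lt_trans dist_ge (le_lt_trans dist_le eB_lt); rewrite ltxx.
Qed.

Lemma proper_of_witness b b' W a : (V b `<=` V b')%classic -> BP b W -> V b' a ->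
  qform W a < 0 ->
  [/\ (V b `<` V b')%classic, (K b `<` K b')%classic & (BP b' `<` BP b)%classic].
Proof.
move=> sVV' BPW Va qWa_lt0; split; split.
- exact: sVV'.
- by move=> /(_ a Va) /BPW.2 /(lt_le_trans qWa_lt0); rewrite ltxx.
- exact: K_sub.
- by move=> /(_ _ (K_proj Va)) /(pairing_K_nlt0 BPW); rewrite pairing_proj.
- exact: BP_sub.
- by move=> /(_ W BPW) [_ /(_ a Va) /(lt_le_trans qWa_lt0)]; rewrite ltxx.
Qed.

End Cones.

Section Admissibility.
Variables (R : realType) (n m : nat).
Local Notation V := (@V R n m).

Lemma kfl_nat k : kfl (k%:R : R) = k.
Proof. exact: natrK. Qed.

Lemma thfr_nat k : thfr (k%:R : R) = 0.
Proof. by rewrite /thfr kfl_nat subrr. Qed.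

Lemma rcl_nat k : rcl (k%:R : R) = k.
Proof. by rewrite /rcl thfr_nat ltxx kfl_nat. Qed.

Variables (k : nat) (th : R).
Hypotheses (th_ge0 : 0 <= th) (th_lt1 : th < 1).

Lemma kfl_add : kfl (k%:R + th) = k.
Proof.
apply/eqP; rewrite /kfl truncn_eq ?addr_ge0 // lerDl th_ge0 /=.
by rewrite -addn1 natrD ltrD2l.
Qed.

Lemma thfr_add : thfr (k%:R + th) = th.
Proof. by rewrite /thfr kfl_add addrAC subrr add0r. Qed.

Lemma rcl_add : rcl (k%:R + th) = (k + (0 < th)%R)%N.
Proof. by rewrite /rcl thfr_add kfl_add; case: (0 < th) => /=; rewrite ?addn1 ?addn0. Qed.

Lemma rcl_add_le : (rcl (k%:R + th) <= k.+1)%N.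
Proof. by rewrite rcl_add -addn1 leq_add2l leq_b1. Qed.

Lemma admissible_add (a : 'M[R[i]]_(n, m)) : admissible (k%:R + th) a ->
  exists s, [/\ schmidt_coeffs a s, forall j, (k < j)%N -> s j = 0
              & k%:R * s k <= th * \sum_(j < k) s j].
Proof.
case=> _ [s [sa [s0 s_le]]]; rewrite thfr_add kfl_add in s_le.
exists s; split=> // [j lt_kj|]; first exact/s0/(leq_trans rcl_add_le).
have [th_gt0|th_le0] := ltP 0 th.
  have [->|k_gt0] := posnP k; first by rewrite big_ord0 mulr0 mulr0n mul0r.
  by move: (s_le th_gt0); rewrite mulrAC ler_pdivlMr ?ltr0n // mulrC.
have th0 : th = 0 by apply/le_anti; rewrite th_le0 th_ge0.
have sk0 : s k = 0 by apply: s0; rewrite rcl_add th0 ltxx addn0.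
by rewrite sk0 th0 mulr0 mul0r.
Qed.

Lemma V_nat_sub_add : (V k%:R `<=` V (k%:R + th))%classic.
Proof.
move=> a [ua [s [sa [s0 _]]]]; rewrite rcl_nat in s0; split=> //; exists s; split=> //; split.
  by rewrite rcl_add => j /(leq_trans (leq_addr _ _)) /s0.
rewrite thfr_add kfl_add s0 // => _.
by rewrite mulr_ge0 ?divr_ge0 ?sumr_ge0 // => j _; apply: schmidt_coeffs_ge0 sa _.
Qed.

Lemma V_add_sub_succ : (V (k%:R + th) `<=` V k.+1%:R)%classic.
Proof.
move=> a [ua [s [sa [s0 _]]]]; split=> //; exists s; split=> //.
by rewrite rcl_nat thfr_nat ltxx; split=> // j /(leq_trans rcl_add_le) /s0.
Qed.

End Admissibility.

Section SchmidtBound.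
Variables (F : realFieldType) (k : nat).
Hypothesis k_gt0 : (0 < k)%N.

(* The largest value of (sum_j s_j)^2 over (k + th)-admissible unit vectors, attained
   by the coefficients (1, ..., 1, th). *)
Definition schmidt_bound (th : F) : F := (k%:R + th) ^+ 2 / (k%:R + th ^+ 2).

Lemma schmidt_bound_lt (s t : F) :
  0 <= s -> s < t -> t <= 1 -> schmidt_bound s < schmidt_bound t.
Proof.
move=> s_ge0 lt_st t_le1; have k_gt0' : 0 < k%:R :> F by rewrite ltr0n.
have den_gt0 (x : F) : 0 < k%:R + x ^+ 2 by rewrite ltr_wpDr ?sqr_ge0.
rewrite /schmidt_bound ltr_pdivrMr // mulrAC ltr_pdivlMr // -subr_gt0.
have -> : (k%:R + t) ^+ 2 * (k%:R + s ^+ 2) - (k%:R + s) ^+ 2 * (k%:R + t ^+ 2) =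
  k%:R * (t - s) * (k%:R * (2 - s - t) + t * (1 - s) + s * (1 - t)) by ring.
have h1 : 0 < k%:R * (2 - s - t) by rewrite mulr_gt0 //; lra.
have h2 : 0 <= t * (1 - s) by rewrite mulr_ge0 //; lra.
have h3 : 0 <= s * (1 - t) by rewrite mulr_ge0 //; lra.
by rewrite !mulr_gt0 ?subr_gt0 //; lra.
Qed.

Lemma sqr_sum_le_schmidt_bound (x : nat -> F) (th : F) :
  (forall j, 0 <= x j) -> 0 <= th <= 1 -> k%:R * x k <= th * \sum_(j < k) x j ->
  (\sum_(j < k.+1) x j) ^+ 2 <= schmidt_bound th * \sum_(j < k.+1) x j ^+ 2.
Proof.
move=> x_ge0 /andP[th_ge0 th_le1] xk_le; rewrite !big_ord_recr /=.
set S := \sum_(j < k) x j in xk_le *; set t := x k in xk_le *.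
set Q := \sum_(j < k) x j ^+ 2.
have S_ge0 : 0 <= S by rewrite sumr_ge0.
have SQ : S ^+ 2 <= k%:R * Q.
  have := @sqr_sum_mul_le _ _ (fun j : 'I_k => x j) (fun _ => 1)
    (fun _ => num_real _) (fun _ => num_real _).
  by rewrite sumr_const card_ord expr1n mulrC; under eq_bigr do rewrite mulr1.
have k1 : 1 <= k%:R :> F by rewrite ler1n.
rewrite /schmidt_bound mulrAC ler_pdivlMr ?ltr_wpDr ?sqr_ge0 ?(lt_le_trans ltr01) //.
rewrite -(ler_pM2l (lt_le_trans ltr01 k1)) -subr_ge0.
have -> : k%:R * ((k%:R + th) ^+ 2 * (Q + t ^+ 2)) - k%:R * ((S + t) ^+ 2 * (k%:R + th ^+ 2))
  = (th * S - k%:R * t) * ((k%:R + 2 * th - 1) * (th * S - k%:R * t)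
                          + 2 * (1 - th) * (k%:R + th) * S)
    + (k%:R + th) ^+ 2 * (k%:R * Q - S ^+ 2) by ring.
have t_ge0 : 0 <= t := x_ge0 k.
apply: addr_ge0; last by rewrite mulr_ge0 ?sqr_ge0 ?subr_ge0.
rewrite mulr_ge0 ?subr_ge0 // addr_ge0 // !mulr_ge0 //; lra.
Qed.

End SchmidtBound.

Section Separation.
Variables (R : realType) (n m k : nat).
Hypotheses (k_gt0 : (0 < k)%N) (lt_k_nm : (k < minn n m)%N).
Local Notation C := R[i].
Local Notation V := (@V R n m).
Local Notation K := (@K R n m).
Local Notation BP := (@BP R n m).

Lemma succ_le_n : (k.+1 <= n)%N. Proof. by move: lt_k_nm; rewrite leq_min => /andP[]. Qed.
Lemma succ_le_m : (k.+1 <= m)%N. Proof. by move: lt_k_nm; rewrite leq_min => /andP[]. Qed.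

Local Notation W th := (witness succ_le_n succ_le_m (schmidt_bound k th)).

Lemma sumr_schmidt_trunc (s : nat -> R) (F : R -> R) : F 0 = 0 ->
  (forall j, (k < j)%N -> s j = 0) -> \sum_(j < minn n m) F (s j) = \sum_(j < k.+1) F (s j).
Proof.
by move=> F0 s0; apply: (sumr_ord_trunc (F := fun j => F (s j)) lt_k_nm) => j /s0 ->.
Qed.

Lemma witness_BP th : 0 <= th -> th < 1 -> BP (k%:R + th) (W th).
Proof.
move=> th_ge0 th_lt1; split=> [|a Va]; first exact: witness_hermitian.
have [s [sa s0 sk_le]] := admissible_add th_ge0 th_lt1 Va.
have /(unit_vec_schmidt sa) := Va.1.
rewrite (sumr_schmidt_trunc (F := fun x => x ^+ 2)) ?expr0n // => s2.
rewrite qform_witness Va.1 mulr1 subr_ge0.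
have := norm_diag_sum_le succ_le_n succ_le_m sa.
rewrite (sumr_schmidt_trunc (F := id)) // => le_s.
apply: le_trans (_ : ((\sum_(j < k.+1) s j) ^+ 2)%:C <= _); last first.
  rewrite lecR -[leRHS]mulr1 -s2; apply: sqr_sum_le_schmidt_bound => //.
    exact: schmidt_coeffs_ge0 sa.
  by rewrite th_ge0 ltW.
by rewrite rmorphXn !expr2 ler_pM.
Qed.

Definition probe_coeff (tau : R) (j : nat) : R :=
  (if (j < k)%N then 1 else if j == k then tau else 0) / Num.sqrt (k%:R + tau ^+ 2).

Definition probe tau : 'M[C]_(n, m) := diag_state n m (probe_coeff tau).

Section Probe.
Variables (tau : R).
Hypotheses (tau_ge0 : 0 <= tau) (tau_le1 : tau <= 1).
Local Notation sigma := (Num.sqrt (k%:R + tau ^+ 2)).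

Lemma probe_norm_gt0 : 0 < sigma.
Proof. by rewrite sqrtr_gt0 ltr_wpDr ?sqr_ge0 ?ltr0n. Qed.

Lemma sum_probe_coeff (G : R -> R) :
  \sum_(j < k) G (probe_coeff tau j) = k%:R * G sigma^-1.
Proof.
rewrite (eq_bigr (fun _ => G sigma^-1)) ?sumr_const ?card_ord ?mulr_natl // => j _.
by rewrite /probe_coeff ltn_ord mul1r.
Qed.

Lemma probe_coeffk : probe_coeff tau k = tau / sigma.
Proof. by rewrite /probe_coeff ltnn eqxx. Qed.

Lemma probe_coeff_gt j : (k < j)%N -> probe_coeff tau j = 0.
Proof. by move=> lt_kj; rewrite /probe_coeff ltnNge ltnW // gtn_eqF // mul0r. Qed.

Lemma probe_schmidt : schmidt_coeffs (probe tau) (probe_coeff tau).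
Proof.
apply: diag_state_schmidt => [j|i j le_ij|j le_j]; last first.
- by rewrite probe_coeff_gt // (leq_trans lt_k_nm).
- rewrite ler_pM2r ?invr_gt0 ?probe_norm_gt0 //.
  case: (ltngtP j k) => [lt_jk|_|eq_jk]; first by rewrite (leq_ltn_trans le_ij lt_jk).
    by repeat case: ifP => _; rewrite ?ler01.
  case: ltnP => [_ //|le_ki].
  have -> : i = k by apply/eqP; rewrite eqn_leq le_ki -eq_jk le_ij.
  by rewrite eqxx.
- by rewrite divr_ge0 ?sqrtr_ge0 //; repeat case: ifP => _; rewrite ?ler01.
Qed.

Lemma probe_unit : unit_vec (probe tau).
Proof.
apply/(unit_vec_schmidt probe_schmidt).
rewrite (sumr_schmidt_trunc (F := fun x => x ^+ 2)) ?expr0n //; last exact: probe_coeff_gt.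
rewrite big_ord_recr /= (sum_probe_coeff (fun x => x ^+ 2)) probe_coeffk.
rewrite exprMn !exprVn -mulrDl sqr_sqrtr ?addr_ge0 ?sqr_ge0 //.
by rewrite mulfV // gt_eqF // ltr_wpDr ?sqr_ge0 ?ltr0n.
Qed.

Lemma sum_probe_coeff_succ : \sum_(j < k.+1) probe_coeff tau j = (k%:R + tau) / sigma.
Proof. by rewrite big_ord_recr /= (sum_probe_coeff id) probe_coeffk mulrDl. Qed.

Lemma qform_probe th :
  qform (W th) (probe tau) = (schmidt_bound k th - schmidt_bound k tau)%:C.
Proof.
rewrite qform_witness probe_unit mulr1 diag_sum_diag_state sum_probe_coeff_succ.
rewrite ger0_norm ?lecR ?divr_ge0 ?addr_ge0 ?sqrtr_ge0 // -rmorphXn -rmorphB.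
by rewrite expr_div_n sqr_sqrtr ?addr_ge0 ?sqr_ge0.
Qed.

Lemma qform_probe_lt0 th : 0 <= th -> th < tau -> qform (W th) (probe tau) < 0.
Proof. by move=> th_ge0 lt_th; rewrite qform_probe ltcR subr_lt0 schmidt_bound_lt. Qed.

End Probe.

Lemma probe_V_add tau : 0 < tau -> tau < 1 -> V (k%:R + tau) (probe tau).
Proof.
move=> tau_gt0 tau_lt1; have [tau_ge0 tau_le1] := (ltW tau_gt0, ltW tau_lt1).
split; first exact: probe_unit.
exists (probe_coeff tau); split; first exact: probe_schmidt.
rewrite rcl_add ?thfr_add ?kfl_add // tau_gt0 addn1.
split=> [j|_]; first exact: probe_coeff_gt.
by rewrite (sum_probe_coeff tau id) probe_coeffk mulrA mulfVK // pnatr_eq0 -lt0n.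
Qed.

Lemma probe_V_succ : V k.+1%:R (probe 1).
Proof.
split; first exact: probe_unit.
exists (probe_coeff 1); split; first exact: probe_schmidt.
by rewrite rcl_nat thfr_nat ltxx; split=> // j; exact: probe_coeff_gt.
Qed.

Lemma proper_nat_add th : 0 < th -> th < 1 ->
  [/\ (V k%:R `<` V (k%:R + th))%classic, (K k%:R `<` K (k%:R + th))%classic
     & (BP (k%:R + th) `<` BP k%:R)%classic].
Proof.
move=> th_gt0 th_lt1; have := witness_BP (lexx (0 : R)) ltr01; rewrite addr0 => BP_k.
apply: proper_of_witness (V_nat_sub_add (ltW th_gt0) th_lt1) BP_k
  (probe_V_add th_gt0 th_lt1) _.
exact: qform_probe_lt0 _ (ltW th_gt0) (ltW th_lt1) _ (lexx 0) th_gt0.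
Qed.

Lemma proper_add_succ th : 0 <= th -> th < 1 ->
  [/\ (V (k%:R + th) `<` V k.+1%:R)%classic, (K (k%:R + th) `<` K k.+1%:R)%classic
     & (BP k.+1%:R `<` BP (k%:R + th))%classic].
Proof.
move=> th_ge0 th_lt1.
apply: proper_of_witness (V_add_sub_succ th_ge0 th_lt1) (witness_BP th_ge0 th_lt1)
  probe_V_succ _.
exact: qform_probe_lt0 _ ler01 (lexx 1) _ th_ge0 th_lt1.
Qed.

End Separation.

Local Open Scope classical_set_scope.

Theorem proposition3p7 (R : realType) (n m k : nat) (theta : R) :
  (1 <= k)%N -> (k < minn n m)%N -> 0 < theta -> theta < 1 ->
  let alpha := k%:R + theta in
  [/\ @V R n m k%:R `<` @V R n m alpha /\ @V R n m alpha `<` @V R n m k.+1%:R,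
      @K R n m k%:R `<` @K R n m alpha /\ @K R n m alpha `<` @K R n m k.+1%:R
    & @BP R n m k.+1%:R `<` @BP R n m alpha /\ @BP R n m alpha `<` @BP R n m k%:R].
Proof.
move=> k_gt0 lt_k_nm th_gt0 th_lt1 alpha.
have [V_k K_k BP_k] := proper_nat_add k_gt0 lt_k_nm th_gt0 th_lt1.
have [V_k1 K_k1 BP_k1] := proper_add_succ k_gt0 lt_k_nm (ltW th_gt0) th_lt1.
by split; split.
Qed.
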